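(* Let $G_1,G_2$ be nondeterministic automata ($G_i=\langle\Sigma_{i,\tau},Q_i,\rightarrow_i,Q_i^0\rangle$) with secret states $Q_i^S\subseteq Q_i$, and equip $G_1\|G_2$ with secret states $\{(x_1,x_2)\mid x_1\in Q_1^S\text{ or }x_2\in Q_2^S\}$; assume $UR(Q_i^0)\not\subseteq Q_i^S$ for $i=1,2$. For $i=1,2$, let $\sim_o$ be an opaque observation equivalence on $G_i$ with quotient $\tilde G_i$ (secret states $\{[x]\mid x\in Q_i^S\}$), let $H_{i,ob}$ be the quotient of $det(\tilde G_i)$ modulo an opaque bisimulation, $H_{i,b}$ the quotient of $det(\tilde G_i)$ modulo a bisimulation, and $H_{i,obd}$ the desired observer of $H_{i,ob}$ (delete classes $[X]$ with $X$ consisting only of secret states, keep reachable part). Let $T'_i=TPO(H_{i,obd},H_{i,b})$, let $G_i^T$ be the transformed automaton of $T'_i$, let $T=TPO(det_d(G_1\|G_2),det(G_1\|G_2))$ be the largest monolithic three-player observer w.r.t. $G_1\|G_2$, and let $\rho$ be the renaming map. Then for every string $s$ defined from the initial state of $G_1^T\|G_2^T$, the string $\rho(s)$ labels a path from the initial state of $T$.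
   Context: Automata: a (nondeterministic) automaton $G=\langle\Sigma_\tau,Q,\rightarrow,Q^0\rangle$ has finite observable alphabet $\Sigma$, special unobservable symbol $\tau$, $\Sigma_\tau=\Sigma\cup\{\tau\}$, $\rightarrow\subseteq Q\times\Sigma_\tau\times Q$, initial states $Q^0$. Deterministic: one initial state, no $\tau$-transitions, functional. $p\overset{s}{\Rightarrow}q$ ($s\in\Sigma^*$): a path from $p$ to $q$ whose labels with $\tau$'s deleted spell $s$. $UR(B)=\{q\mid b\overset{\varepsilon}{\Rightarrow}q,\ b\in B\}$. Observer $det(G)$: deterministic over $\Sigma$, initial state $UR(Q^0)$, $X\xrightarrow{\sigma}Y$ iff $Y=UR(\{y\mid x\xrightarrow{\sigma}y,\ x\in X\})\ne\emptyset$, reachable part. Desired observer $det_d(G)$: $det(G)$ with every state $X\subseteq Q^S$ deleted, reachable part kept. Quotient modulo equivalence $\sim$: classes as states, $[x]\xrightarrow{\sigma}[y]$ iff $x'\xrightarrow{\sigma}y'$ for some $x'\in[x],y'\in[y]$, classes of initial states initial. Bisimulation: equivalence $\approx$ with $x_1\approx x_2$, $x_1\xrightarrow{\sigma}y_1$ implying $x_2\xrightarrow{\sigma}y_2$ for some $y_2\approx y_1$. Opaque observation equivalence on $G$: equivalence $\sim_o$ on $Q$ such that $x_1\sim_o x_2$ implies (i) whenever $x_1\overset{s}{\Rightarrow}y_1$ there is $y_2\sim_o y_1$ with $x_2\overset{s}{\Rightarrow}y_2$, and (ii) $x_1\in Q^S\iff x_2\in Q^S$. Opaque bisimulation on $det(G)$: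 equivalence $\approx_o$ on its states with $X_1\approx_o X_2$ implying (i) whenever $X_1\xrightarrow{s}Y_1$ there is $Y_2\approx_o Y_1$ with $X_2\xrightarrow{s}Y_2$, and (ii) $X_1\subseteq Q^S\iff X_2\subseteq Q^S$. Synchronous composition of $A_1$ (alphabet $\Sigma_1$) and $A_2$ (alphabet $\Sigma_2$): states $Q_1\times Q_2$, initial $Q_1^0\times Q_2^0$, marked $Q_1^m\times Q_2^m$; shared events ($\Sigma_1\cap\Sigma_2$) move both components, events in $(\Sigma_1\setminus\Sigma_2)\cup\{\tau\}$ move only the first, events in $(\Sigma_2\setminus\Sigma_1)\cup\{\tau\}$ move only the second. Largest three-player observer $TPO(D,F)$ for deterministic $D=\langle\Sigma,X_D,\rightarrow_D,d_0\rangle$, $F=\langle\Sigma,X_F,\rightarrow_F,f_0\rangle$: with fresh symbol $\epsilon$ and fresh erasure symbols $\Sigma^r=\{\sigma\to\epsilon\mid\sigma\in\Sigma\}$, states are $Y$-states $(d,f)$, $Z$-states $Z((d,f),e)$ ($e\in\Sigma$, its observable component), $W$-states $W((d,f),a)$ ($a\in\Sigma\cup\Sigma^r$, its action component); initial state $(d_0,f_0)$; only reachable states; transitions exactly: (1) $(d,f)\xrightarrow{e}Z((d,f),e)$ if $e$ defined at $f$ in $F$; (2) $Z((d,f),e)\xrightarrow{\theta}Z((d',f),e)$ for $\theta\in\Sigma$ if $d\xrightarrow{\theta}_Dd'$; (3) $Z((d,f),e)\xrightarrow{\epsilon}W((d,f),e)$ if $e$ defined at $d$ in $D$ and at $f$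 in $F$; (4) $Z((d,f),e)\xrightarrow{e\to\epsilon}W((d,f),e\to\epsilon)$ if $e$ defined at $f$ in $F$; (5) $W((d,f),e)\xrightarrow{e}(d',f')$ with $d\xrightarrow{e}_Dd'$, $f\xrightarrow{e}_Ff'$; (6) $W((d,f),e\to\epsilon)\xrightarrow{e}(d,f')$ with $f\xrightarrow{e}_Ff'$. Transformed automaton: for a TPO $T_i$ over alphabet $\Sigma_i$ and the other index $j$, introduce fresh formal symbols $\theta_e$ and $\sigma_{a,w}$ (all distinct from each other and from events). Let $E_i$ be the set of observable components of $Z$-states of $T_i$ and $A_i$ the set of action components of its $W$-states. $G_i^T$ is the deterministic automaton with the states of $T_i$, initial state the initial $Y$-state, marked states all $Y$-states, and transitions: (a) $y\xrightarrow{e}z$ for each transition $y\xrightarrow{e}z$ of $T_i$ out of a $Y$-state; (b) $z\xrightarrow{\theta_e}q$ for each transition $z\xrightarrow{\theta}q$ of $T_i$ out of a $Z$-state $z$ with observable component $e$; (c) $w\xrightarrow{e_{a,w}}y$ for each transition $w\xrightarrow{e}y$ of $T_i$ out of a $W$-state with action component $a$; (d) a self-loop $y\xrightarrow{\alpha}y$ at every $Y$-state for every $\alpha\in\Sigma_j\setminus\Sigma_i$. Its alphabet is $\Sigma_{G_i^T}=\Sigma_i\cup(\Sigma_j\setminus\Sigma_i)\cup\{\theta_e\mid\theta\in\Sigma_i\cup\{\epsilon\}\cup\Sigma_i^r,\ e\in E_i\}\cup\{\sigma_{a,w}\mid\sigma\in\Sigma_i,\ a\in A_i\}\cup\{\beta_\alpha,\beta_{\alpha,w},\beta_{\alpha\to\epsilon,w}\mid\beta\in\Sigma_i\cap\Sigma_j,\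 \alpha\in\Sigma_j\setminus\Sigma_i\}$. Renaming: $\rho(e)=e$ for events, $\rho(\theta_e)=\theta$, $\rho(\sigma_{a,w})=\sigma$, extended letter-by-letter to strings. *)

From mathcomp Require Import ssreflect ssrfun ssrbool eqtype ssrnat seq choice fintype.

Set Implicit Arguments.
Unset Strict Implicit.
Unset Printing Implicit Defensive.

(* Labels are [option L]; [None] is the unobservable
   symbol tau.  [sts] is the state set (a predicate on the carrier type),
   [alph] the observable alphabet.  Deterministic automata are simply
   automata of this shape without tau-moves and with one initial state. *)
Record aut (L : Type) : Type := Aut {
  st   : Type;
  sts  : st -> Prop;
  tr   : st -> option L -> st -> Prop;
  init : st -> Prop;
  alph : L -> Prop }.
Arguments Aut {L}.
Arguments st {L} a.
Arguments sts {L} a _.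
Arguments tr {L} a _ _ _.
Arguments init {L} a _.
Arguments alph {L} a _.

Definition psubset (T : Type) (X Y : T -> Prop) : Prop := forall x, X x -> Y x.
Arguments psubset {T} X Y.

Inductive wpath (L : Type) (A : aut L) : st A -> list L -> st A -> Prop :=
| wp_nil x : sts A x -> @wpath L A x nil x
| wp_tau x y s z : tr A x None y -> @wpath L A y s z -> @wpath L A x s z
| wp_ev x e y s z : tr A x (Some e) y -> @wpath L A y s z -> @wpath L A x (e :: s) z.
Arguments wpath {L} A _ _ _.

Definition UR (L : Type) (A : aut L) (B : st A -> Prop) : st A -> Prop :=
  fun q => exists b, B b /\ wpath A b nil q.
Arguments UR {L} A B _.

Inductive reach (L : Type) (A : aut L) : st A -> Prop :=
| reach_init x : init A x -> sts A x -> @reach L A x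
| reach_step x a y : @reach L A x -> tr A x a y -> sts A y -> @reach L A y.
Arguments reach {L} A _.

Definition trim (L : Type) (A : aut L) : aut L :=
  Aut (st A) (reach A)
      (fun x a y => reach A x /\ tr A x a y /\ sts A y)
      (fun x => init A x /\ sts A x) (alph A).
Arguments trim {L} A.

Definition restrict (L : Type) (A : aut L) (P : st A -> Prop) : aut L :=
  Aut (st A) (fun x => sts A x /\ P x)
      (fun x a y => tr A x a y /\ sts A x /\ P x /\ sts A y /\ P y)
      (fun x => init A x /\ sts A x /\ P x) (alph A).
Arguments restrict {L} A P.

Definition post (L : Type) (A : aut L) (X : st A -> Prop) (e : L) : st A -> Prop :=
  fun y => exists x, X x /\ tr A x (Some e) y.
Arguments post {L} A X e _.

Definition det_raw (L : Type) (A : aut L) : aut L :=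
  Aut (st A -> Prop) (fun _ => True)
      (fun X a Y => match a with
                    | Some e => Y = UR A (post A X e) /\ exists y, Y y
                    | None => False
                    end)
      (fun X => X = UR A (init A)) (alph A).
Arguments det_raw {L} A.

Definition det (L : Type) (A : aut L) : aut L := trim (det_raw A).
Arguments det {L} A.

Definition det_d (L : Type) (A : aut L) (S : st A -> Prop) : aut L :=
  trim (restrict (det A) (fun X => ~ psubset X S)).
Arguments det_d {L} A S.

Definition equiv_on (L : Type) (A : aut L) (R : st A -> st A -> Prop) : Prop :=
  (forall x, sts A x -> R x x) /\
  (forall x y, sts A x -> sts A y -> R x y -> R y x) /\
  (forall x y z, sts A x -> sts A y -> sts A z -> R x y -> R y z -> R x z).
Arguments equiv_on {L} A R.

Definition cls (L : Type) (A : aut L) (R : st A -> st A -> Prop) (x : st A) : st A -> Prop :=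
  fun y => sts A y /\ R x y.
Arguments cls {L} A R x _.

Definition is_cls (L : Type) (A : aut L) (R : st A -> st A -> Prop) (C : st A -> Prop) : Prop :=
  exists x, sts A x /\ C = cls A R x.
Arguments is_cls {L} A R C.

Definition quot (L : Type) (A : aut L) (R : st A -> st A -> Prop) : aut L :=
  Aut (st A -> Prop) (is_cls A R)
      (fun C a D => is_cls A R C /\ is_cls A R D /\
                    exists x y, C x /\ D y /\ tr A x a y)
      (fun C => exists x, init A x /\ sts A x /\ C = cls A R x) (alph A).
Arguments quot {L} A R.

Definition quot_secret (L : Type) (A : aut L) (R : st A -> st A -> Prop)
  (S : st A -> Prop) : (st A -> Prop) -> Prop :=
  fun C => exists x, sts A x /\ S x /\ C = cls A R x.
Arguments quot_secret {L} A R S _.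

Definition bisim (L : Type) (A : aut L) (R : st A -> st A -> Prop) : Prop :=
  equiv_on A R /\
  forall x1 x2 e y1, sts A x1 -> sts A x2 -> R x1 x2 -> tr A x1 (Some e) y1 ->
    exists y2, tr A x2 (Some e) y2 /\ R y2 y1.
Arguments bisim {L} A R.

Definition opaque_obs_eq (L : Type) (A : aut L) (S : st A -> Prop)
  (R : st A -> st A -> Prop) : Prop :=
  equiv_on A R /\
  forall x1 x2, sts A x1 -> sts A x2 -> R x1 x2 ->
    (forall s y1, wpath A x1 s y1 -> exists y2, R y2 y1 /\ wpath A x2 s y2) /\
    (S x1 <-> S x2).
Arguments opaque_obs_eq {L} A S R.

Definition opaque_bisim (L : Type) (A : aut L) (S : st A -> Prop)
  (R : st (det A) -> st (det A) -> Prop) : Prop :=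
  equiv_on (det A) R /\
  forall X1 X2, sts (det A) X1 -> sts (det A) X2 -> R X1 X2 ->
    (forall s Y1, wpath (det A) X1 s Y1 -> exists Y2, R Y2 Y1 /\ wpath (det A) X2 s Y2) /\
    (psubset X1 S <-> psubset X2 S).
Arguments opaque_bisim {L} A S R.

Definition desired_quot (L : Type) (A : aut L) (S : st A -> Prop)
  (R : st (det A) -> st (det A) -> Prop) : aut L :=
  trim (restrict (quot (det A) R)
                 (fun C => ~ exists X, C X /\ psubset X S)).
Arguments desired_quot {L} A S R.

Definition sync (L : Type) (A1 A2 : aut L) : aut L :=
  Aut (st A1 * st A2)%type (fun p => sts A1 p.1 /\ sts A2 p.2)
      (fun p a q => match a with
         | None => (tr A1 p.1 None q.1 /\ q.2 = p.2) \/
                   (tr A2 p.2 None q.2 /\ q.1 = p.1)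
         | Some e =>
             (alph A1 e /\ alph A2 e /\ tr A1 p.1 a q.1 /\ tr A2 p.2 a q.2) \/
             (alph A1 e /\ ~ alph A2 e /\ tr A1 p.1 a q.1 /\ q.2 = p.2) \/
             (~ alph A1 e /\ alph A2 e /\ tr A2 p.2 a q.2 /\ q.1 = p.1)
         end)
      (fun p => init A1 p.1 /\ init A2 p.2)
      (fun e => alph A1 e \/ alph A2 e).
Arguments sync {L} A1 A2.

Definition sync_secret (L : Type) (A1 A2 : aut L) (S1 : st A1 -> Prop)
  (S2 : st A2 -> Prop) : st (sync A1 A2) -> Prop :=
  fun p => S1 p.1 \/ S2 p.2.
Arguments sync_secret {L} A1 A2 S1 S2 _.

(* labels: events [AEv e], the fresh symbol epsilon [AEps], erasures
   e -> epsilon [AEr e] *)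
Inductive act (L : Type) : Type := AEv (e : L) | AEps | AEr (e : L).
Arguments AEps {L}.
Arguments AEv {L} e.
Arguments AEr {L} e.

Inductive tpo_st (X Y L : Type) : Type :=
| TY (d : X) (f : Y)
| TZ (d : X) (f : Y) (e : L)
| TW (d : X) (f : Y) (a : act L).
Arguments TY {X Y L} d f.
Arguments TZ {X Y L} d f e.
Arguments TW {X Y L} d f a.

Definition defined_at (L : Type) (A : aut L) (x : st A) (e : L) : Prop :=
  exists y, tr A x (Some e) y.
Arguments defined_at {L} A x e.

Inductive tpo_tr (L : Type) (D F : aut L) :
  tpo_st (st D) (st F) L -> option (act L) -> tpo_st (st D) (st F) L -> Prop :=
| tpo1 d f e : defined_at F f e ->
    @tpo_tr L D F (TY d f) (Some (AEv e)) (TZ d f e)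
| tpo2 d d' f e th : tr D d (Some th) d' ->
    @tpo_tr L D F (TZ d f e) (Some (AEv th)) (TZ d' f e)
| tpo3 d f e : defined_at D d e -> defined_at F f e ->
    @tpo_tr L D F (TZ d f e) (Some AEps) (TW d f (AEv e))
| tpo4 d f e : defined_at F f e ->
    @tpo_tr L D F (TZ d f e) (Some (AEr e)) (TW d f (AEr e))
| tpo5 d d' f f' e : tr D d (Some e) d' -> tr F f (Some e) f' ->
    @tpo_tr L D F (TW d f (AEv e)) (Some (AEv e)) (TY d' f')
| tpo6 d f f' e : tr F f (Some e) f' ->
    @tpo_tr L D F (TW d f (AEr e)) (Some (AEv e)) (TY d f').

Arguments tpo_tr {L} D F _ _ _.

Definition act_alph (L : Type) (Sig : L -> Prop) (a : act L) : Prop :=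
  match a with AEv e => Sig e | AEps => True | AEr e => Sig e end.

Definition tpo (L : Type) (D F : aut L) : aut (act L) :=
  trim (Aut (tpo_st (st D) (st F) L) (fun _ => True) (@tpo_tr L D F)
            (fun q => exists d f, q = TY d f /\ init D d /\ init F f)
            (act_alph (alph D))).

(* [SEv e] : event e;  [STh th e] : theta_e;  [SSg s a] : sigma_{a,w}
   (beta_alpha = STh (AEv beta) alpha, beta_{alpha,w} = SSg beta (AEv alpha),
    beta_{alpha->eps,w} = SSg beta (AEr alpha)) *)
Inductive sym (L : Type) : Type :=
| SEv (e : L)
| STh (th : act L) (e : L)
| SSg (s : L) (a : act L).
Arguments SEv {L} e.
Arguments STh {L} th e.
Arguments SSg {L} s a.

Section Transformed.
Variables (X Y L : Type).
Variables (Tsts : tpo_st X Y L -> Prop)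
          (Ttr : tpo_st X Y L -> option (act L) -> tpo_st X Y L -> Prop)
          (Sigi Sigj : L -> Prop).

Inductive gt_tr : tpo_st X Y L -> option (sym L) -> tpo_st X Y L -> Prop :=
| gta d f e z : Ttr (TY d f) (Some (AEv e)) z -> gt_tr (TY d f) (Some (SEv e)) z
| gtb d f e th q : Ttr (TZ d f e) (Some th) q -> gt_tr (TZ d f e) (Some (STh th e)) q
| gtc d f a e y : Ttr (TW d f a) (Some (AEv e)) y -> gt_tr (TW d f a) (Some (SSg e a)) y
| gtd d f al : Tsts (TY d f) -> Sigj al -> ~ Sigi al ->
    gt_tr (TY d f) (Some (SEv al)) (TY d f).

Definition Zcomp (e : L) : Prop := exists d f, Tsts (TZ d f e).
Definition Wcomp (a : act L) : Prop := exists d f, Tsts (TW d f a).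

Definition gt_alph (x : sym L) : Prop :=
  match x with
  | SEv e => Sigi e \/ (Sigj e /\ ~ Sigi e)
  | STh th e => (act_alph Sigi th /\ Zcomp e) \/
      (exists b, th = AEv b /\ Sigi b /\ Sigj b /\ Sigj e /\ ~ Sigi e)
  | SSg s a => (Sigi s /\ Wcomp a) \/
      (Sigi s /\ Sigj s /\ exists al, Sigj al /\ ~ Sigi al /\ (a = AEv al \/ a = AEr al))
  end.
End Transformed.

Definition transformed (L : Type) (D F : aut L) (Sigi Sigj : L -> Prop) : aut (sym L) :=
  let T := tpo D F in
  Aut (tpo_st (st D) (st F) L) (sts T) (gt_tr (sts T) (tr T) Sigi Sigj)
      (init T) (gt_alph (sts T) Sigi Sigj).

Definition rho (L : Type) (x : sym L) : act L :=
  match x with SEv e => AEv e | STh th _ => th | SSg s _ => AEv s end.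

Definition nfa (E Q : Type) (trQ : Q -> option E -> Q -> Prop) (I : Q -> Prop)
  (Sig : E -> Prop) : aut E :=
  Aut Q (fun _ => True) trQ I Sig.

(* A state of the monolithic three-player observer T is abstracted by a
   configuration: its phase (Y, Z or W) together with the words u and v whose
   observer states form its D- and F-components.  Along a run of
   G1^T || G2^T, each local state follows the current configuration: its
   observer components contain the local observer states reached by the
   projections of u and v onto its alphabet.  Since the local quotients are
   taken modulo an opaque observation equivalence and (opaque) bisimulations,
   every move of a local observer reflects a run of the original component;
   the runs of G1 and G2 on the two projections of a word combine into a run
   of G1 || G2 (non-secret if both are), and this is exactly what enables the
   move of T labelled by the renamed synchronous label. *)

From mathcomp Require Import ssreflect ssrfun ssrbool eqtype ssrnat seq choice fintype.
From mathcomp Require Import boolp.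

Set Implicit Arguments.
Unset Strict Implicit.
Unset Printing Implicit Defensive.

Section WeakPaths.
Variables (L : Type) (A : aut L).
Hypothesis tr_sts : forall x a y, tr A x a y -> sts A x.

Lemma wpath_sts x s y : wpath A x s y -> sts A y.
Proof. by elim. Qed.

Lemma wpath_cat x s y t z : wpath A x s y -> wpath A y t z -> wpath A x (s ++ t) z.
Proof.
elim=> {x s y} [//|x y s w xy _ IH|x e y s w xy _ IH] yz /=.
- exact: wp_tau xy (IH yz).
- exact: wp_ev xy (IH yz).
Qed.

Lemma wpath_cons x e s z : wpath A x (e :: s) z ->
  exists a b, wpath A x [::] a /\ tr A a (Some e) b /\ wpath A b s z.
Proof.
move Hk: (e :: s) => k p; elim: p e s Hk => {x k z} [//|x y k z xy _ IH|x e' y k z xy yz _] e s.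
- move=> /IH [a [b [xa [ab bz]]]]; exists a, b; split=> //; exact: wp_tau xy xa.
- case=> -> ->; exists x, y; split=> //; exact: wp_nil (tr_sts xy).
Qed.

Lemma wpath_sts_src x s y : wpath A x s y -> sts A x.
Proof. by case=> // [x' y' ? ? xy _|x' ? y' ? ? xy _]; exact: tr_sts xy. Qed.

Lemma wpath_split x s t z : wpath A x (s ++ t) z ->
  exists y, wpath A x s y /\ wpath A y t z.
Proof.
elim: s x => [|e s IH] x /= p.
  by exists x; split=> //; apply: wp_nil; exact: wpath_sts_src p.
have [a [b [xa [ab /IH [y [by' yz]]]]]] := wpath_cons p.
by exists y; split=> //; apply: (wpath_cat xa); exact: wp_ev ab by'.
Qed.

Lemma wpath_rcons x s e z : wpath A x (rcons s e) z ->
  exists a b, wpath A x s a /\ tr A a (Some e) b /\ wpath A b [::] z.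
Proof.
rewrite -cats1 => /wpath_split [y [xy /wpath_cons [a [b [ya [ab bz]]]]]].
by exists a, b; split=> //; rewrite -(cats0 s); exact: wpath_cat xy ya.
Qed.

(* The state of [det A] reached by [w]; [reached [::]] is convertible to
   [UR A (init A)]. *)
Definition reached (w : seq L) : st A -> Prop :=
  fun q => exists b, init A b /\ wpath A b w q.

Lemma UR_post_reached w e : UR A (post A (reached w) e) = reached (rcons w e).
Proof.
apply: funext => q; apply: propext; split.
- move=> [b [[x [[b0 [b0I b0x]] xb]] bq]]; exists b0; split=> //.
  by rewrite -cats1; apply: wpath_cat b0x _; exact: wp_ev xb bq.
- move=> [b0 [b0I /wpath_rcons [a [b [b0a [ab bq]]]]]].
  by exists b; split=> //; exists a; split=> //; exists b0.
Qed.

Lemma wpath_notau_nil x y : (forall x' y', ~ tr A x' None y') ->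
  wpath A x [::] y -> x = y.
Proof.
move=> notau; move Hk: [::] => k p.
by case: p Hk => // ? ? ? ? /notau.
Qed.

Lemma wpath_notau1 x e y : (forall x' y', ~ tr A x' None y') ->
  wpath A x [:: e] y -> tr A x (Some e) y.
Proof.
move=> notau /wpath_cons [a [b [xa [ab by']]]].
by rewrite (wpath_notau_nil notau xa) -(wpath_notau_nil notau by').
Qed.
End WeakPaths.
Arguments reached {L} A w _.

Lemma trim_tr_sts L (A : aut L) x a y : tr (trim A) x a y -> sts (trim A) x /\ sts (trim A) y.
Proof. by case=> xR [xy ys]; split=> //; exact: reach_step xR xy ys. Qed.

Section Observers.
Variables (L : Type) (A : aut L).
Hypothesis tr_sts : forall x a y, tr A x a y -> sts A x.

Lemma det_notau X Y : ~ tr (det A) X None Y.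
Proof. by case=> _ []. Qed.

Lemma det_tr_reached w e Y : tr (det A) (reached A w) (Some e) Y ->
  Y = reached A (rcons w e) /\ exists y, reached A (rcons w e) y.
Proof. by move=> [_ [[-> ne] _]]; rewrite UR_post_reached in ne *. Qed.

Lemma det_move w e : reach (det_raw A) (reached A w) ->
  (exists y, reached A (rcons w e) y) ->
  tr (det A) (reached A w) (Some e) (reached A (rcons w e)) /\
  reach (det_raw A) (reached A (rcons w e)).
Proof.
move=> wR ne; have step : tr (det_raw A) (reached A w) (Some e) (reached A (rcons w e)).
  by split=> //; rewrite UR_post_reached.
by split; [split | exact: reach_step wR step I].
Qed.

Lemma det_init : init (det A) (reached A [::]) /\ reach (det_raw A) (reached A [::]).
Proof. by have wR : reach (det_raw A) (reached A [::]) by exact: reach_init. Qed.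

Lemma opaque_bisim_bisim S R : opaque_bisim A S R -> bisim (det A) R.
Proof.
move=> [eqR sim]; split=> // X1 X2 e Y1 X1s X2s X12 step.
have [_ Y1s] := trim_tr_sts step.
have [Y2 [Y21 p]] := (sim X1 X2 X1s X2s X12).1 [:: e] Y1 (wp_ev step (wp_nil Y1s)).
by exists Y2; split=> //; apply: wpath_notau1 p; [by move=> ? ? ? [] | exact: det_notau].
Qed.

Lemma quot_det_tr R w e C C' : bisim (det A) R ->
  tr (quot (det A) R) C (Some e) C' -> C (reached A w) ->
  C' (reached A (rcons w e)) /\ exists y, reached A (rcons w e) y.
Proof.
move=> [[_ [Rsym Rtrans]] sim] [[X0 [X0s ->]] [[Y0 [Y0s ->]] [X [Y [[Xs X0X] [[Ys Y0Y] step]]]]]].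
move=> [ws X0w].
have Xw : R X (reached A w) by apply: Rtrans X0w => //; exact: Rsym.
have [Y2 [step2 Y2Y]] := sim _ _ _ _ Xs ws Xw step.
have [Y2E ne] := det_tr_reached step2; subst Y2.
have [_ Y2s] := trim_tr_sts step2.
by split=> //; split=> //; apply: Rtrans Y0Y _ => //; exact: Rsym.
Qed.
Variable S : st A -> Prop.
Let R := restrict (det A) (fun X => ~ psubset X S).

Lemma det_d_move w e : reach R (reached A w) ->
  (exists y, reached A (rcons w e) y /\ ~ S y) ->
  tr (det_d A S) (reached A w) (Some e) (reached A (rcons w e)) /\
  reach R (reached A (rcons w e)).
Proof.
move=> wR [y [wy ys]]; have [wD wP] : sts R (reached A w) by case: wR.
have [step wD'] := det_move wD (ex_intro _ y wy).
have wP' : ~ psubset (reached A (rcons w e)) S by move/(_ y wy).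
have stepR : tr R (reached A w) (Some e) (reached A (rcons w e)) by [].
by split; [split | exact: reach_step wR stepR _].
Qed.

Lemma det_d_init : (exists y, reached A [::] y /\ ~ S y) ->
  init (det_d A S) (reached A [::]) /\ reach R (reached A [::]).
Proof.
move=> [y [wy ys]]; have [init0 wD] := det_init.
have wP : ~ psubset (reached A [::]) S by move/(_ y wy).
by have wR : reach R (reached A [::]) by exact: reach_init.
Qed.

End Observers.

Section ObservationQuotient.
Variables (E Q : Type) (Sig : E -> Prop) (trq : Q -> option E -> Q -> Prop).
Variables (Iq S : Q -> Prop) (Ro : Q -> Q -> Prop).
Let G := nfa trq Iq Sig.
Let Gt := quot G Ro.
Hypothesis obs_eq : opaque_obs_eq G S Ro.

Lemma quot_tr_lift C a C' x s : tr Gt C a C' -> C x ->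
  (forall x' y', trq x' a y' -> wpath G x' s y') ->
  exists y, C' y /\ wpath G x s y.
Proof.
have [[_ [Rsym Rtrans]] sim] := obs_eq.
move=> [[z [_ ->]] [[z' [_ ->]] [x' [y' [[_ zx'] [[_ z'y'] step]]]]]] [_ zx] lift.
have x'x : Ro x' x := Rtrans _ _ _ I I I (Rsym _ _ I I zx') zx.
have [y [yy' xy]] := (sim x' x I I x'x).1 s y' (lift _ _ step).
by exists y; split=> //; split=> //; exact: Rtrans _ _ _ I I I z'y' (Rsym _ _ I I yy').
Qed.

Lemma quot_wpath C w C' x : wpath Gt C w C' -> C x ->
  exists y, C' y /\ wpath G x w y.
Proof.
move=> p; elim: p x => {C w C'} [C _|C C1 w C' step _ IH|C e C1 w C' step _ IH] x Cx.
- by exists x; split=> //; exact: wp_nil.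
- have [x1 [C1x1 xx1]] :=
    quot_tr_lift step Cx (fun _ _ xy => wp_tau (A := G) xy (wp_nil (A := G) I)).
  have [y [C'y x1y]] := IH _ C1x1.
  by exists y; split=> //; exact: wpath_cat xx1 x1y.
- have [x1 [C1x1 xx1]] :=
    quot_tr_lift step Cx (fun _ _ xy => wp_ev (A := G) xy (wp_nil (A := G) I)).
  have [y [C'y x1y]] := IH _ C1x1.
  by exists y; split=> //; exact: wpath_cat xx1 x1y.
Qed.

Lemma reached_quot w C : reached Gt w C -> exists y, reached G w y /\ C = cls G Ro y.
Proof.
have [[Rrefl [Rsym Rtrans]] _] := obs_eq.
move=> [C0 [[x [xI [_ ->]]] p]].
have [y [Cy xy]] := quot_wpath p (conj I (Rrefl x I)).
exists y; split; first by exists x.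
have [z [_ Cz]] := wpath_sts p; move: Cy; rewrite Cz => -[_ zy].
apply: funext => q; apply: propext; split=> -[_ h]; split=> //.
- exact: Rtrans _ _ _ I I I (Rsym _ _ I I zy) h.
- exact: Rtrans _ _ _ I I I zy h.
Qed.

Lemma reached_quot_safe w : ~ psubset (reached Gt w) (quot_secret G Ro S) ->
  exists y, reached G w y /\ ~ S y.
Proof.
move=> ns; apply: contrapT => nsafe; apply: ns => C /reached_quot [y [wy ->]].
by exists y; split=> //; split=> //; apply: contrapT => ny; apply: nsafe; exists y.
Qed.
End ObservationQuotient.

Inductive phase (L : Type) : Type := PY | PZ (e : L) | PW (a : act L).
Arguments PY {L}.

Definition shape (X Y L : Type) (q : tpo_st X Y L) : phase L :=
  match q with TY _ _ => PY | TZ _ _ e => PZ e | TW _ _ a => PW a end.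

Definition tpo_d (X Y L : Type) (q : tpo_st X Y L) : X :=
  match q with TY d _ | TZ d _ _ | TW d _ _ => d end.

Definition tpo_f (X Y L : Type) (q : tpo_st X Y L) : Y :=
  match q with TY _ f | TZ _ f _ | TW _ f _ => f end.

Definition engaged (L : Type) (Sig : L -> Prop) (K : phase L) : Prop :=
  match K with PY => True | PZ e => Sig e | PW a => act_alph Sig a end.

Definition proj (L : Type) (Sig : L -> Prop) : seq L -> seq L :=
  filter (fun e => `[< Sig e >]).

Definition word_over (L : Type) (Sig : L -> Prop) (w : seq L) : bool :=
  all (fun e => `[< Sig e >]) w.

Lemma word_over_rcons L (Sig : L -> Prop) w e :
  word_over Sig w -> Sig e -> word_over Sig (rcons w e).
Proof.
by move=> ww we; rewrite /word_over all_rcons -/(word_over _ _) ww andbT; apply/asboolP.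
Qed.

Lemma proj_rcons_in L (Sig : L -> Prop) w e :
  Sig e -> proj Sig (rcons w e) = rcons (proj Sig w) e.
Proof. by move=> ?; rewrite /proj filter_rcons asboolT. Qed.

Lemma proj_rcons_out L (Sig : L -> Prop) w e :
  ~ Sig e -> proj Sig (rcons w e) = proj Sig w.
Proof. by move=> ?; rewrite /proj filter_rcons asboolF. Qed.

(* A configuration (K, u, v) stands for the state of the monolithic observer
   T in phase K whose D- and F-components are the observer states reached by
   u and v.  [config_step] is the move of configurations induced by a label
   of the transformed automata. *)
Inductive config_step (L : Type) (Sig1 Sig2 : L -> Prop) :
  phase L -> seq L -> seq L -> sym L -> phase L -> seq L -> seq L -> Prop :=
| cs_select e u v : Sig1 e \/ Sig2 e ->
    config_step Sig1 Sig2 PY u v (SEv e) (PZ e) u v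
| cs_insert e th u v : Sig1 e /\ Sig1 th \/ Sig2 e /\ Sig2 th ->
    config_step Sig1 Sig2 (PZ e) u v (STh (AEv th) e) (PZ e) (rcons u th) v
| cs_keep e u v : config_step Sig1 Sig2 (PZ e) u v (STh AEps e) (PW (AEv e)) u v
| cs_erase e u v : config_step Sig1 Sig2 (PZ e) u v (STh (AEr e) e) (PW (AEr e)) u v
| cs_release e u v :
    config_step Sig1 Sig2 (PW (AEv e)) u v (SSg e (AEv e)) PY (rcons u e) (rcons v e)
| cs_release_erased e u v :
    config_step Sig1 Sig2 (PW (AEr e)) u v (SSg e (AEr e)) PY u (rcons v e).

Lemma config_step_sym L (Sig1 Sig2 : L -> Prop) K u v x K' u' v' :
  config_step Sig1 Sig2 K u v x K' u' v' -> config_step Sig2 Sig1 K u v x K' u' v'.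
Proof. by case=> *; constructor; tauto. Qed.

Lemma config_step_fun L (Sig1 Sig2 Sig3 Sig4 : L -> Prop) K u v x K1 u1 v1 K2 u2 v2 :
  config_step Sig1 Sig2 K u v x K1 u1 v1 -> config_step Sig3 Sig4 K u v x K2 u2 v2 ->
  [/\ K1 = K2, u1 = u2 & v1 = v2].
Proof.
move=> cs1 cs2; case: cs1 cs2 => [e ? ? ?|e th ? ? ?|e ? ?|e ? ?|e ? ?|e ? ?] cs2;
  by inversion cs2; subst.
Qed.

Lemma gt_alph_SEv X Y L (Tsts : tpo_st X Y L -> Prop) (Sig Sig' : L -> Prop) e :
  Sig e \/ Sig' e -> gt_alph Tsts Sig Sig' (SEv e).
Proof. by move=> /= e12; case: (pselect (Sig e)) => ?; [left | right]; tauto. Qed.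

Lemma config_step_SEv L (Sig1 Sig2 : L -> Prop) K u v e K' u' v' :
  config_step Sig1 Sig2 K u v (SEv e) K' u' v' -> K = PY.
Proof. by move=> cs; inversion cs. Qed.

Section Component.
Variables (E Q : Type) (Sig Sig' : E -> Prop) (trq : Q -> option E -> Q -> Prop).
Variables (Iq S : Q -> Prop) (Ro : Q -> Q -> Prop).
Variables (Rob Rb : ((Q -> Prop) -> Prop) -> ((Q -> Prop) -> Prop) -> Prop).
Let G := nfa trq Iq Sig.
Let Gt := quot G Ro.
Let St := quot_secret G Ro S.
Let Hobd := desired_quot Gt St Rob.
Let Hb := quot (det Gt) Rb.
Let Tl := tpo Hobd Hb.
Let GT := transformed Hobd Hb Sig Sig'.
Hypothesis trq_alph : forall x e y, trq x (Some e) y -> Sig e.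
Hypothesis obs_eq : opaque_obs_eq G S Ro.
Hypothesis obisim : opaque_bisim Gt St Rob.
Hypothesis bisim_b : bisim (det Gt) Rb.

Definition runs (w : seq E) : Prop := exists y, reached G w y.
Definition runs_safely (w : seq E) : Prop := exists y, reached G w y /\ ~ S y.

Let Gt_tr_sts C a C' : tr Gt C a C' -> sts Gt C.
Proof. by case. Qed.

Lemma reached_rcons_alph w e y : reached G (rcons w e) y -> Sig e.
Proof.
move=> [b [_ /(wpath_rcons (A := G) (fun _ _ _ _ => I)) [a [c [_ [ac _]]]]]].
exact: trq_alph ac.
Qed.

Lemma Hobd_step d th d' u : tr Hobd d (Some th) d' -> d (reached Gt u) ->
  d' (reached Gt (rcons u th)) /\ Sig th /\ runs_safely (rcons u th).
Proof.
move=> [_ [[step [_ [_ [_ d'ok]]]] _]] du.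
have [d'u _] := quot_det_tr Gt_tr_sts (opaque_bisim_bisim obisim) step du.
have [y [wy ys]] : runs_safely (rcons u th).
  by apply: (reached_quot_safe obs_eq) => sec; apply: d'ok; exists (reached Gt (rcons u th)).
by split=> //; split; [exact: reached_rcons_alph wy | exists y].
Qed.

Lemma Hb_step f e f' v : tr Hb f (Some e) f' -> f (reached Gt v) ->
  f' (reached Gt (rcons v e)) /\ Sig e /\ runs (rcons v e).
Proof.
move=> step fv; have [f'v [C wC]] := quot_det_tr Gt_tr_sts bisim_b step fv.
have [y [wy _]] := reached_quot obs_eq wC.
by split=> //; split; [exact: reached_rcons_alph wy | exists y].
Qed.

Definition pending (K : phase E) (u v : seq E) : Prop :=
  match K with
  | PY => True
  | PZ e => runs (proj Sig (rcons v e))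
  | PW (AEv e) => runs_safely (proj Sig (rcons u e)) /\ runs (proj Sig (rcons v e))
  | PW AEps => False
  | PW (AEr e) => runs (proj Sig (rcons v e))
  end.

Record tracks (q : st GT) (K : phase E) (u v : seq E) : Prop := Tracks {
  tracks_sts : sts GT q;
  tracks_shape : engaged Sig K /\ shape q = K \/ ~ engaged Sig K /\ shape q = PY;
  tracks_d : tpo_d q (reached Gt (proj Sig u));
  tracks_f : tpo_f q (reached Gt (proj Sig v));
  tracks_u : runs_safely (proj Sig u);
  tracks_v : runs (proj Sig v);
  tracks_pending : pending K u v }.

Lemma gt_tr_sts q x q' : tr GT q x q' -> sts GT q -> sts GT q'.
Proof. by case=> // [? ? ? ? | ? ? ? ? ? | ? ? ? ? ?] /trim_tr_sts []. Qed.

Lemma local_move_Y d f K u v x q' : tracks (TY d f) K u v -> tr GT (TY d f) (Some x) q' ->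
  (exists K' u' v', config_step Sig Sig' K u v x K' u' v' /\ tracks q' K' u' v') \/
  ~ engaged Sig K /\ exists al, x = SEv al /\ (Sig al \/ Sig' al).
Proof.
move=> [qs qshape qd qf qu qv _] step; have q's := gt_tr_sts step qs.
inversion step as [? ? e ? tstep| | |? ? al ? alj nali]; subst.
- case: tstep => _ [tstep _]; inversion tstep as [? ? ? [f' ff']| | | | |]; subst.
  have [_ [ale re]] := Hb_step ff' qf.
  case: qshape => [[_ <-] | [nen _]]; last by right; split=> //; exists e; split=> //; left.
  left; exists (PZ e), u, v; split; first by constructor; left.
  by constructor=> //=; [left | rewrite proj_rcons_in].
- case: qshape => [[_ <-] | [nen _]]; last by right; split=> //; exists al; split=> //; right.
  left; exists (PZ al), u, v; split; first by constructor; right.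
  by constructor=> //=; [right | rewrite proj_rcons_out].
Qed.

Lemma local_move_Z d f e K u v x q' : tracks (TZ d f e) K u v -> tr GT (TZ d f e) (Some x) q' ->
  exists K' u' v', config_step Sig Sig' K u v x K' u' v' /\ tracks q' K' u' v'.
Proof.
move=> [qs qshape qd qf qu qv qpend] step; have q's := gt_tr_sts step qs.
have [ene EK] : Sig e /\ K = PZ e by case: qshape => -[enK /= EK] //; move: enK; rewrite -EK.
subst K.
inversion step as [|? ? ? ? ? tstep| |]; subst.
case: tstep => _ [tstep _].
inversion tstep as [|? d' ? ? th' dd'|? ? ? [d' dd'] [f' ff']|? ? ? ?| |]; subst.
- have [d'u [alth ru]] := Hobd_step dd' qd.
  exists (PZ e), (rcons u th'), v; split; first by constructor; left.
  by constructor=> //=; rewrite proj_rcons_in.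
- have [_ [_ ru]] := Hobd_step dd' qd; have [_ [_ rv]] := Hb_step ff' qf.
  exists (PW (AEv e)), u, v; split; first exact: cs_keep.
  by constructor=> //=; [left | rewrite !proj_rcons_in].
- exists (PW (AEr e)), u, v; split; first exact: cs_erase.
  by constructor=> //=; left.
Qed.

Lemma local_move_W d f a K u v x q' : tracks (TW d f a) K u v -> tr GT (TW d f a) (Some x) q' ->
  exists K' u' v', config_step Sig Sig' K u v x K' u' v' /\ tracks q' K' u' v'.
Proof.
move=> [qs qshape qd qf qu qv qpend] step; have q's := gt_tr_sts step qs.
have EK : K = PW a by case: qshape => -[_ /= EK].
subst K.
inversion step as [| |? ? ? ? ? tstep|]; subst.
case: tstep => _ [tstep _].
inversion tstep as [| | | |? d' ? f' ? dd' ff'|? ? f' ? ff']; subst.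
- have [d'u [ale ru]] := Hobd_step dd' qd; have [f'v [_ rv]] := Hb_step ff' qf.
  exists PY, (rcons u e), (rcons v e); split; first exact: cs_release.
  by constructor=> //=; [left | rewrite proj_rcons_in ..].
- have [f'v [ale rv]] := Hb_step ff' qf.
  exists PY, u, (rcons v e); split; first exact: cs_release_erased.
  by constructor=> //=; [left | rewrite proj_rcons_in ..].
Qed.

Lemma local_move q K u v x q' : tracks q K u v -> tr GT q (Some x) q' ->
  (exists K' u' v', config_step Sig Sig' K u v x K' u' v' /\ tracks q' K' u' v') \/
  ~ engaged Sig K /\ exists al, x = SEv al /\ (Sig al \/ Sig' al).
Proof.
case: q => [d f|d f e|d f a] tq step; first exact: local_move_Y tq step.
- by left; exact: local_move_Z tq step.
- by left; exact: local_move_W tq step.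
Qed.

Lemma shape_Zcomp q e : sts GT q -> shape q = PZ e -> Zcomp (sts Tl) e.
Proof. by case: q => // d f e' qs [<-]; exists d, f. Qed.

Lemma shape_Wcomp q a : sts GT q -> shape q = PW a -> Wcomp (sts Tl) a.
Proof. by case: q => // d f a' qs [<-]; exists d, f. Qed.

Lemma local_stay q K u v x K' u' v' : tracks q K u v -> ~ alph GT x ->
  config_step Sig Sig' K u v x K' u' v' -> tracks q K' u' v'.
Proof.
move=> tq nx cs; case: cs tq nx => {K u v x K' u' v'}
  [e u v sel|e th u v ins|e u v|e u v|e u v|e u v] [qs qshape qd qf qu qv qpend] nx.
- by case: nx; exact: gt_alph_SEv.
- have nth : ~ Sig th.
    move=> thS; apply: nx; case: qshape => [[ene /(shape_Zcomp qs) Ze]|[nene _]].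
      by left.
    by right; exists th; tauto.
  by constructor; rewrite ?proj_rcons_out.
- case: qshape => [[ene /(shape_Zcomp qs) Ze]|[nene qY]]; first by case: nx; left.
  by constructor=> //=; [right | split; rewrite ?proj_rcons_out].
- case: qshape => [[ene /(shape_Zcomp qs) Ze]|[nene qY]]; first by case: nx; left.
  by constructor=> //=; right.
- case: qshape => [[ene /(shape_Wcomp qs) We]|[nene qY]]; first by case: nx; left.
  by constructor=> //=; [left | rewrite proj_rcons_out ..].
- case: qshape => [[ene /(shape_Wcomp qs) We]|[nene qY]]; first by case: nx; left.
  by constructor=> //=; [left | rewrite proj_rcons_out ..].
Qed.

Lemma tracks_init q : init GT q -> ~ psubset (UR G (init G)) S -> tracks q PY [::] [::].
Proof.
move=> qI ninit; have qs : sts GT q by exact: reach_init qI.1 I.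
case: qI qs => -[d [f [-> [[[[X [[-> _] [Xs ->]]] _] _] [Y [[-> _] [Ys ->]]]]]]] _ qs.
have [y [yI ys]] : runs_safely [::].
  apply: contrapT => nr; apply: ninit => y yI.
  by apply: contrapT => ys; apply: nr; exists y.
constructor=> //=; first by left.
- by split=> //; exact: obisim.1.1.
- by split=> //; exact: bisim_b.1.1.
1,2: by exists y.
Qed.
End Component.

Section SyncRuns.
Variables (L : Type) (A1 A2 : aut L).
Hypotheses (all_sts1 : forall x, sts A1 x) (all_sts2 : forall x, sts A2 x).
Let A := sync A1 A2.

Lemma sync_tau1 x y z : wpath A1 x [::] y -> wpath A (x, z) [::] (y, z).
Proof.
move Hk: [::] => k p; elim: p Hk => {x k y} [x _|x y k y' xy _ IH|//] Hk.
- by apply: wp_nil; split.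
- by apply: wp_tau (IH Hk); left.
Qed.

Lemma sync_tau2 x y z : wpath A2 x [::] y -> wpath A (z, x) [::] (z, y).
Proof.
move Hk: [::] => k p; elim: p Hk => {x k y} [x _|x y k y' xy _ IH|//] Hk.
- by apply: wp_nil; split.
- by apply: wp_tau (IH Hk); right.
Qed.

Lemma sync_wpath w x1 x2 y1 y2 : word_over (alph A) w ->
  wpath A1 x1 (proj (alph A1) w) y1 -> wpath A2 x2 (proj (alph A2) w) y2 ->
  wpath A (x1, x2) w (y1, y2).
Proof.
have tr1 : forall x a y, tr A1 x a y -> sts A1 x by move=> *; exact: all_sts1.
have tr2 : forall x a y, tr A2 x a y -> sts A2 x by move=> *; exact: all_sts2.
elim: w x1 x2 => [|e w IH] x1 x2 /=.
  by move=> _ p1 p2; exact: wpath_cat (sync_tau1 _ p1) (sync_tau2 _ p2).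
rewrite /word_over /= -/(word_over _ _) => /andP [/asboolP ea /IH {}IH].
case: (pselect (alph A1 e)) => e1; case: (pselect (alph A2 e)) => e2;
  rewrite /proj /= ?(asboolT e1) ?(asboolT e2) ?(asboolF e1) ?(asboolF e2) -/(proj _ _).
- move=> /(wpath_cons tr1) [a1 [b1 [xa1 [ab1 p1]]]] /(wpath_cons tr2) [a2 [b2 [xa2 [ab2 p2]]]].
  apply: wpath_cat (sync_tau1 _ xa1) (wpath_cat (sync_tau2 _ xa2) (wp_ev _ (IH _ _ p1 p2))).
  by left.
- move=> /(wpath_cons tr1) [a1 [b1 [xa1 [ab1 p1]]]] p2.
  apply: wpath_cat (sync_tau1 _ xa1) (wp_ev _ (IH _ _ p1 p2)).
  by right; left.
- move=> p1 /(wpath_cons tr2) [a2 [b2 [xa2 [ab2 p2]]]].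
  apply: wpath_cat (sync_tau2 _ xa2) (wp_ev _ (IH _ _ p1 p2)).
  by right; right.
- by case: ea.
Qed.
End SyncRuns.

Section Composition.
Variables (E Q1 Q2 : Type) (Sig1 Sig2 : E -> Prop).
Variables (tr1 : Q1 -> option E -> Q1 -> Prop) (I1 S1 : Q1 -> Prop).
Variables (tr2 : Q2 -> option E -> Q2 -> Prop) (I2 S2 : Q2 -> Prop).
Variables (Ro1 : Q1 -> Q1 -> Prop) (Ro2 : Q2 -> Q2 -> Prop).
Variables (Rob1 Rb1 : ((Q1 -> Prop) -> Prop) -> ((Q1 -> Prop) -> Prop) -> Prop).
Variables (Rob2 Rb2 : ((Q2 -> Prop) -> Prop) -> ((Q2 -> Prop) -> Prop) -> Prop).
Let G1 := nfa tr1 I1 Sig1.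
Let G2 := nfa tr2 I2 Sig2.
Let Gt1 := quot G1 Ro1.
Let Gt2 := quot G2 Ro2.
Let St1 := quot_secret G1 Ro1 S1.
Let St2 := quot_secret G2 Ro2 S2.
Let GT1 := transformed (desired_quot Gt1 St1 Rob1) (quot (det Gt1) Rb1) Sig1 Sig2.
Let GT2 := transformed (desired_quot Gt2 St2 Rob2) (quot (det Gt2) Rb2) Sig2 Sig1.
Let G12 := sync G1 G2.
Let SS := sync_secret G1 G2 S1 S2.
Let D := det_d G12 SS.
Let F := det G12.
Let T := tpo D F.
Let R := restrict (det G12) (fun X => ~ psubset X SS).
Let W := reached G12.
Hypotheses (tr1_alph : forall x e y, tr1 x (Some e) y -> Sig1 e)
  (tr2_alph : forall x e y, tr2 x (Some e) y -> Sig2 e).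
Hypotheses (obs_eq1 : opaque_obs_eq G1 S1 Ro1) (obs_eq2 : opaque_obs_eq G2 S2 Ro2).
Hypotheses (obisim1 : opaque_bisim Gt1 St1 Rob1) (obisim2 : opaque_bisim Gt2 St2 Rob2).
Hypotheses (bisim1 : bisim (det Gt1) Rb1) (bisim2 : bisim (det Gt2) Rb2).
Local Notation tracks1 := (@tracks E Q1 Sig1 Sig2 tr1 I1 S1 Ro1 Rob1 Rb1).
Local Notation tracks2 := (@tracks E Q2 Sig2 Sig1 tr2 I2 S2 Ro2 Rob2 Rb2).

Definition tstate (K : phase E) (u v : seq E) : st T :=
  match K with
  | PY => TY (W u) (W v)
  | PZ e => TZ (W u) (W v) e
  | PW a => TW (W u) (W v) a
  end.

Record config_inv (K : phase E) (u v : seq E) : Prop := ConfigInv {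
  inv_D : reach R (W u);
  inv_F : reach (det_raw G12) (W v);
  inv_T : sts T (tstate K u v);
  inv_u : word_over (alph G12) u;
  inv_v : word_over (alph G12) v;
  inv_engaged : engaged Sig1 K \/ engaged Sig2 K }.

Lemma sync_runs w : word_over (alph G12) w ->
  runs Sig1 tr1 I1 (proj Sig1 w) -> runs Sig2 tr2 I2 (proj Sig2 w) -> exists p, W w p.
Proof.
move=> ww [y1 [b1 [b1I p1]]] [y2 [b2 [b2I p2]]].
by exists (y1, y2), (b1, b2); split=> //; exact: sync_wpath ww p1 p2.
Qed.

Lemma sync_runs_safely w : word_over (alph G12) w ->
  runs_safely Sig1 tr1 I1 S1 (proj Sig1 w) -> runs_safely Sig2 tr2 I2 S2 (proj Sig2 w) ->
  exists p, W w p /\ ~ SS p.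
Proof.
move=> ww [y1 [[b1 [b1I p1]] ys1]] [y2 [[b2 [b2I p2]] ys2]].
by exists (y1, y2); split; [exists (b1, b2); split=> //; exact: sync_wpath ww p1 p2 | case].
Qed.

Lemma F_move v e : reach (det_raw G12) (W v) -> word_over (alph G12) v ->
  alph G12 e -> runs Sig1 tr1 I1 (proj Sig1 (rcons v e)) ->
  runs Sig2 tr2 I2 (proj Sig2 (rcons v e)) ->
  [/\ tr F (W v) (Some e) (W (rcons v e)), reach (det_raw G12) (W (rcons v e))
    & word_over (alph G12) (rcons v e)].
Proof.
move=> vR vw e12 r1 r2; have vw' := word_over_rcons vw e12.
by have [step vR'] := det_move (A := G12) (fun _ _ _ _ => conj I I) vR (sync_runs vw' r1 r2).
Qed.

Lemma D_move u e : reach R (W u) -> word_over (alph G12) u ->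
  alph G12 e -> runs_safely Sig1 tr1 I1 S1 (proj Sig1 (rcons u e)) ->
  runs_safely Sig2 tr2 I2 S2 (proj Sig2 (rcons u e)) ->
  [/\ tr D (W u) (Some e) (W (rcons u e)), reach R (W (rcons u e))
    & word_over (alph G12) (rcons u e)].
Proof.
move=> uR uw e12 r1 r2; have uw' := word_over_rcons uw e12.
have safe := sync_runs_safely uw' r1 r2.
by have [step uR'] := det_d_move (A := G12) (fun _ _ _ _ => conj I I) uR safe.
Qed.

Lemma tpo_move t a t' : sts T t -> tpo_tr D F t (Some a) t' -> tr T t (Some a) t' /\ sts T t'.
Proof. by move=> ts step; split; [|exact: reach_step ts step I]. Qed.

Lemma sim_step K u v x K' u' v' q1 q2 : config_step Sig1 Sig2 K u v x K' u' v' ->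
  config_inv K u v -> tracks1 q1 K' u' v' -> tracks2 q2 K' u' v' ->
  tr T (tstate K u v) (Some (rho x)) (tstate K' u' v') /\ config_inv K' u' v'.
Proof.
move=> cs inv t1 t2; case: cs inv t1 t2 => {K u v x K' u' v'}
  [e u v sel|e th u v ins|e u v|e u v|e u v|e u v] [uR vR Ts uw vw eng] t1 t2.
- have [step vR' vw'] := F_move vR vw sel (tracks_pending t1) (tracks_pending t2).
  have dF : defined_at F (W v) e by exists (W (rcons v e)).
  have [Tstep Ts'] := tpo_move Ts (tpo1 _ dF).
  by split=> //; constructor.
- have th12 : alph G12 th by case: ins => -[]; [left | right].
  have [step uR' uw'] := D_move uR uw th12 (tracks_u t1) (tracks_u t2).
  have [Tstep Ts'] := tpo_move Ts (tpo2 _ _ step).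
  by split=> //; constructor.
- have [ru1 rv1] := tracks_pending t1; have [ru2 rv2] := tracks_pending t2.
  have [stepD _ _] := D_move uR uw eng ru1 ru2.
  have [stepF _ _] := F_move vR vw eng rv1 rv2.
  have dD : defined_at D (W u) e by exists (W (rcons u e)).
  have dF : defined_at F (W v) e by exists (W (rcons v e)).
  have [Tstep Ts'] := tpo_move Ts (tpo3 dD dF).
  by split=> //; constructor.
- have [stepF _ _] := F_move vR vw eng (tracks_pending t1) (tracks_pending t2).
  have dF : defined_at F (W v) e by exists (W (rcons v e)).
  have [Tstep Ts'] := tpo_move Ts (tpo4 _ dF).
  by split=> //; constructor.
- have [stepD uR' uw'] := D_move uR uw eng (tracks_u t1) (tracks_u t2).
  have [stepF vR' vw'] := F_move vR vw eng (tracks_v t1) (tracks_v t2).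
  have [Tstep Ts'] := tpo_move Ts (tpo5 stepD stepF).
  by split=> //; constructor=> //; left.
- have [stepF vR' vw'] := F_move vR vw eng (tracks_v t1) (tracks_v t2).
  have [Tstep Ts'] := tpo_move Ts (tpo6 _ stepF).
  by split=> //; constructor=> //; left.
Qed.

Lemma sync_config_step q1 q2 K u v x q1' q2' :
  tracks1 q1 K u v -> tracks2 q2 K u v -> engaged Sig1 K \/ engaged Sig2 K ->
  tr (sync GT1 GT2) (q1, q2) (Some x) (q1', q2') ->
  exists K' u' v', [/\ config_step Sig1 Sig2 K u v x K' u' v',
    tracks1 q1' K' u' v' & tracks2 q2' K' u' v'].
Proof.
move=> t1 t2 eng.
have move1 := local_move tr1_alph obs_eq1 obisim1 bisim1 t1.
have move2 := local_move tr2_alph obs_eq2 obisim2 bisim2 t2.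
case=> [[_ [_ [/move1 m1 /move2 m2]]]
  | [[_ [nx2 [/move1 m1 /= ->]]] | [nx1 [_ [/move2 m2 /= ->]]]]].
- case: m1 => [[K1 [u1 [v1 [cs1 t1']]]] | [n1 [al [xal _]]]];
    case: m2 => [[K2 [u2 [v2 [cs2 t2']]]] | [n2 [al' [xal' _]]]].
  + by move: t2'; case: (config_step_fun cs1 cs2) => <- <- <- t2'; exists K1, u1, v1.
  + by rewrite xal' in cs1; case: n2; rewrite (config_step_SEv cs1).
  + by rewrite xal in cs2; case: n1; rewrite (config_step_SEv cs2).
  + by case: eng.
- case: m1 => [[K1 [u1 [v1 [cs1 t1']]]] | [_ [al [xal al12]]]].
    by exists K1, u1, v1; split=> //; exact: local_stay t2 nx2 (config_step_sym cs1).
  by subst x; case: nx2; apply: gt_alph_SEv; tauto.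
- case: m2 => [[K2 [u2 [v2 [cs2 t2']]]] | [_ [al [xal al12]]]].
    have cs := config_step_sym cs2.
    by exists K2, u2, v2; split=> //; exact: local_stay t1 nx1 cs.
  by subst x; case: nx1; apply: gt_alph_SEv; tauto.
Qed.

Lemma sync_path_sim p s p' : wpath (sync GT1 GT2) p s p' ->
  forall K u v, tracks1 p.1 K u v -> tracks2 p.2 K u v -> config_inv K u v ->
  exists t, wpath T (tstate K u v) (map (@rho E) s) t.
Proof.
elim=> {p s p'} [p _|p p1 s p' step _ IH|[q1 q2] x [q1' q2'] s p' step _ IH] K u v t1 t2 inv.
- by exists (tstate K u v); apply: wp_nil; exact: inv_T inv.
- by case: step => -[step _]; inversion step.
- have [K' [u' [v' [cs t1' t2']]]] := sync_config_step t1 t2 (inv_engaged inv) step.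
  have [Tstep inv'] := sim_step cs inv t1' t2'.
  have [t Tp] := IH _ _ _ t1' t2' inv'.
  by exists t; exact: wp_ev Tstep Tp.
Qed.

Hypotheses (init_open1 : ~ psubset (UR G1 (init G1)) S1)
  (init_open2 : ~ psubset (UR G2 (init G2)) S2).

Lemma sync_init q : init (sync GT1 GT2) q ->
  [/\ tracks1 q.1 PY [::] [::], tracks2 q.2 PY [::] [::],
    config_inv PY [::] [::] & init T (tstate PY [::] [::])].
Proof.
case=> q1I q2I.
have t1 := tracks_init obisim1 bisim1 q1I init_open1.
have t2 := tracks_init obisim2 bisim2 q2I init_open2.
have safe0 := sync_runs_safely (w := [::]) isT (tracks_u t1) (tracks_u t2).
have [DI uR] := det_d_init (A := G12) safe0.
have [FI vR] := det_init G12.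
have TI : init T (tstate PY [::] [::]) by split=> //; exists (W [::]), (W [::]).
by split=> //; constructor=> //; [exact: reach_init TI.1 I | left].
Qed.
End Composition.

Theorem theorem5 (E Q1 Q2 : finType) (Sig1 Sig2 : E -> Prop)
  (tr1 : Q1 -> option E -> Q1 -> Prop) (I1 S1 : Q1 -> Prop)
  (tr2 : Q2 -> option E -> Q2 -> Prop) (I2 S2 : Q2 -> Prop)
  (Hal1 : forall x e y, tr1 x (Some e) y -> Sig1 e)
  (Hal2 : forall x e y, tr2 x (Some e) y -> Sig2 e)
  (Ro1 : Q1 -> Q1 -> Prop) (Ro2 : Q2 -> Q2 -> Prop)
  (Rob1 Rb1 : ((Q1 -> Prop) -> Prop) -> ((Q1 -> Prop) -> Prop) -> Prop)
  (Rob2 Rb2 : ((Q2 -> Prop) -> Prop) -> ((Q2 -> Prop) -> Prop) -> Prop) :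
  let G1 := nfa tr1 I1 Sig1 in
  let G2 := nfa tr2 I2 Sig2 in
  ~ psubset (UR G1 (init G1)) S1 ->
  ~ psubset (UR G2 (init G2)) S2 ->
  opaque_obs_eq G1 S1 Ro1 ->
  opaque_obs_eq G2 S2 Ro2 ->
  let Gt1 := quot G1 Ro1 in
  let Gt2 := quot G2 Ro2 in
  let St1 := quot_secret G1 Ro1 S1 in
  let St2 := quot_secret G2 Ro2 S2 in
  opaque_bisim Gt1 St1 Rob1 ->
  opaque_bisim Gt2 St2 Rob2 ->
  bisim (det Gt1) Rb1 ->
  bisim (det Gt2) Rb2 ->
  let H1obd := desired_quot Gt1 St1 Rob1 in
  let H2obd := desired_quot Gt2 St2 Rob2 in
  let H1b := quot (det Gt1) Rb1 in
  let H2b := quot (det Gt2) Rb2 in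
  let GT1 := transformed H1obd H1b Sig1 Sig2 in
  let GT2 := transformed H2obd H2b Sig2 Sig1 in
  let G12 := sync G1 G2 in
  let T := tpo (det_d G12 (sync_secret G1 G2 S1 S2)) (det G12) in
  forall (s : list (sym E)) q0 q,
    init (sync GT1 GT2) q0 -> wpath (sync GT1 GT2) q0 s q ->
    exists t0 t, init T t0 /\ wpath T t0 (map (@rho E) s) t.
Proof.
move=> G1 G2 open1 open2 oeq1 oeq2 Gt1 Gt2 St1 St2 ob1 ob2 b1 b2
  H1obd H2obd H1b H2b GT1 GT2 G12 T s q0 q q0I p.
have [t1 t2 inv TI] := sync_init ob1 ob2 b1 b2 open1 open2 q0I.
have [t Tp] := sync_path_sim Hal1 Hal2 oeq1 oeq2 ob1 ob2 b1 b2 p t1 t2 inv.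
by exists (tstate Sig1 Sig2 tr1 I1 S1 tr2 I2 S2 PY [::] [::]), t.
Qed.
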